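(* The class of tolerance graphs contains a graph that is not a pairwise compatibility graph; i.e., tolerance graphs are not contained in PCG.
   Context: All graphs are finite and simple. A graph $G=(V,E)$ is a pairwise compatibility graph (PCG) if there exist a tree $T$ with non-negative real edge weights, whose set of leaves is exactly $V$, and two non-negative real numbers $d_{min}\le d_{max}$ such that for all distinct $u,v\in V$, $(u,v)\in E$ if and only if $d_{min}\le d_T(u,v)\le d_{max}$, where $d_T(u,v)$ is the sum of the weights of the edges on the unique path from $u$ to $v$ in $T$. A graph $G=(V,E)$ is a tolerance graph if to every node $v$ one can assign a closed interval $I_v$ of the real line and a tolerance $t_v\ge 0$ such that distinct $x,y$ are adjacent if and only if $|I_x\cap I_y|\ge \min\{t_x,t_y\}$, where $|I|$ denotes the length of the interval $I$. *)

From HB Require Import structures.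
From mathcomp Require Import all_boot all_order all_algebra.
From mathcomp Require Import Rstruct.
From Stdlib Require Rdefinitions.
Notation R := Rdefinitions.R.

Set Implicit Arguments. Unset Strict Implicit. Unset Printing Implicit Defensive.
Import Order.TTheory GRing.Theory Num.Theory.
Local Open Scope ring_scope.

Definition simple_graph (V : finType) (e : rel V) : Prop :=
  symmetric e /\ irreflexive e.

Definition is_tree (N : finType) (t : rel N) : Prop :=
  [/\ symmetric t, irreflexive t,
      (forall x y : N, connect t x y) &
      (forall (x : N) (p q : seq N),
          path t x p -> uniq (x :: p) ->
          path t x q -> uniq (x :: q) ->
          last x p = last x q -> p = q)].

(* leaves of the tree: nodes of degree <= 1 (degree exactly 1 as soon as the
   tree has at least two nodes; the single node of a one-node tree is a leaf). *)
Definition is_leaf (N : finType) (t : rel N) (x : N) : bool :=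
  (#|[set y | t x y]| <= 1)%N.

Definition path_weight (N : finType) (w : N -> N -> R) (x : N) (p : seq N) : R :=
  \sum_(a <- pairmap w x p) a.

Definition tree_dist (N : finType) (t : rel N) (w : N -> N -> R)
    (x y : N) (d : R) : Prop :=
  exists p : seq N, [/\ path t x p, uniq (x :: p), last x p = y
                        & path_weight w x p = d].

Definition PCG (V : finType) (e : rel V) : Prop :=
  exists (N : finType) (t : rel N) (w : N -> N -> R) (f : V -> N)
         (dmin dmax : R),
    [/\ is_tree t,
        (forall x y, w x y = w y x),
        (forall x y, t x y -> 0 <= w x y),
        injective f &
        (forall x : N, is_leaf t x <-> exists v : V, f v = x)] /\
    [/\ 0 <= dmin, dmin <= dmax &
        (forall u v : V, u != v -> forall d : R,
            tree_dist t w (f u) (f v) d ->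
            (e u v <-> (dmin <= d /\ d <= dmax)))].

Definition inter_len (a1 b1 a2 b2 : R) : R :=
  Num.max 0 (Num.min b1 b2 - Num.max a1 a2).

Definition tolerance_graph (V : finType) (e : rel V) : Prop :=
  exists (l r tol : V -> R),
    [/\ (forall v, l v <= r v),
        (forall v, 0 <= tol v) &
        (forall x y : V, x != y ->
           (e x y <-> Num.min (tol x) (tol y) <= inter_len (l x) (r x) (l y) (r y)))].

(* Leaf distances of a weighted tree satisfy the four-point condition: for a
   root o, d(x,y) = d(o,x) + d(o,y) - 2 (x|y), where the Gromov product (x|y)
   is the weight of the common prefix of the root paths to x and y, and
   (x|y) >= min((x|z), (y|z)) since common prefixes of root paths are nested.
   Now take the complement of two disjoint 4-cycles, which has an explicit
   tolerance representation.  If it were a PCG, the four non-edges of each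
   4-cycle could not all be shorter than dmin, for then the two chords of the
   cycle, which are edges, would form the strictly largest of the three pair
   sums.  So each 4-cycle has a non-edge longer than dmax, and as every pair
   between the two cycles is an edge, these two long non-edges form the
   strictly largest pair sum: a contradiction. *)

From mathcomp Require Import all_boot all_order all_algebra.
From mathcomp Require Import Rstruct lra.
Set Implicit Arguments. Unset Strict Implicit. Unset Printing Implicit Defensive.
Import Order.TTheory GRing.Theory Num.Theory.
Local Open Scope ring_scope.

Section LongestCommonPrefix.
Variable T : eqType.
Implicit Types s c : seq T.

Fixpoint lcp s1 s2 : seq T :=
  if (s1, s2) is (x :: s1', y :: s2') then
    if x == y then x :: lcp s1' s2' else [::]
  else [::].

Lemma prefix_lcpl s1 s2 : prefix (lcp s1 s2) s1.
Proof.
elim: s1 s2 => [|x s1 IH] [|y s2] //=.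
by case: eqP => // _; rewrite /= eqxx IH.
Qed.

Lemma prefix_lcpr s1 s2 : prefix (lcp s1 s2) s2.
Proof.
elim: s1 s2 => [|x s1 IH] [|y s2] //=.
by case: eqP => // ->; rewrite /= eqxx IH.
Qed.

Lemma prefix_lcp c s1 s2 : prefix c s1 -> prefix c s2 -> prefix c (lcp s1 s2).
Proof.
elim: c s1 s2 => [|z c IH] s1 s2; first by rewrite !prefix0s.
case: s1 s2 => [|x s1] [|y s2] //= /andP[/eqP<- c1] /andP[/eqP<- c2].
by rewrite eqxx /= eqxx IH.
Qed.

Lemma prefix_total c1 c2 s : prefix c1 s -> prefix c2 s -> prefix c1 c2 || prefix c2 c1.
Proof.
elim: s c1 c2 => [|x s IH] [|y1 c1] [|y2 c2] //=; rewrite ?prefix0s ?orbT //.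
by move=> /andP[/eqP-> /IH h1] /andP[/eqP-> /h1]; rewrite eqxx.
Qed.

Lemma lcp_min_prefix s1 s2 s3 :
  prefix (lcp s1 s3) (lcp s1 s2) || prefix (lcp s2 s3) (lcp s1 s2).
Proof.
case/orP: (prefix_total (prefix_lcpr s1 s3) (prefix_lcpr s2 s3)) => [le|le].
- by rewrite prefix_lcp ?prefix_lcpl ?(prefix_trans le) ?prefix_lcpl.
- by rewrite orbC prefix_lcp ?prefix_lcpl ?(prefix_trans le) ?prefix_lcpl.
Qed.

Lemma drop_lcp_heads_differ s1 s2 z a b :
  drop (size (lcp s1 s2)) s1 = z :: a -> drop (size (lcp s1 s2)) s2 = z :: b -> False.
Proof.
set c := lcp s1 s2 => d1 d2.
have ext s x r : prefix c s -> drop (size c) s = x :: r -> prefix (rcons c x) s.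
  rewrite prefixE => /eqP E D.
  by rewrite -(cat_take_drop (size c) s) E D -cat_rcons prefix_prefix.
have: prefix (rcons c z) c.
  by rewrite prefix_lcp ?(ext _ _ _ (prefix_lcpl s1 s2) d1) ?(ext _ _ _ (prefix_lcpr s1 s2) d2).
by move/size_prefix; rewrite size_rcons ltnn.
Qed.

End LongestCommonPrefix.

Lemma last_rev_belast (T : Type) (x : T) s : last (last x s) (rev (belast x s)) = x.
Proof. by elim: s x => [|y s IH] x //=; rewrite rev_cons last_rcons. Qed.

Definition four_point (T : Type) (D : T -> T -> R) :=
  forall x y z u, D x y + D z u <= Num.max (D x z + D y u) (D x u + D y z).

Section WeightedTree.
Variables (N : finType) (t : rel N) (w : N -> N -> R).
Hypothesis t_sym : symmetric t.
Hypothesis w_sym : forall x y, w x y = w y x.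
Hypothesis w_ge0 : forall x y, t x y -> 0 <= w x y.
Hypothesis t_connect : forall x y, connect t x y.
Hypothesis t_uniq_path : forall (x : N) (p q : seq N),
  path t x p -> uniq (x :: p) -> path t x q -> uniq (x :: q) ->
  last x p = last x q -> p = q.

Local Notation W := (path_weight w).

Lemma path_weight_nil x : W x [::] = 0.
Proof. by rewrite /path_weight big_nil. Qed.

Lemma path_weight_cons x y s : W x (y :: s) = w x y + W y s.
Proof. by rewrite /path_weight /= big_cons. Qed.

Lemma path_weight_cat x s1 s2 : W x (s1 ++ s2) = W x s1 + W (last x s1) s2.
Proof. by rewrite /path_weight pairmap_cat big_cat. Qed.

Lemma path_weight_ge0 x s : path t x s -> 0 <= W x s.
Proof.
elim: s x => [|y s IH] x /=; first by rewrite path_weight_nil.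
by case/andP=> txy ps; rewrite path_weight_cons addr_ge0 ?w_ge0 ?IH.
Qed.

Lemma path_prefix x c s : path t x s -> prefix c s -> path t x c.
Proof. by move=> ps /prefixP[r Es]; move: ps; rewrite Es cat_path => /andP[]. Qed.

Lemma path_weight_prefix x c s : path t x s -> prefix c s -> W x c <= W x s.
Proof.
move=> ps /prefixP[r Es]; move: ps; rewrite Es cat_path path_weight_cat.
by case/andP=> _ /path_weight_ge0; rewrite lerDl.
Qed.

Lemma path_weight_rev x s : W (last x s) (rev (belast x s)) = W x s.
Proof.
elim: s x => [|y s IH] x /=; first by rewrite !path_weight_nil.
rewrite rev_cons -cats1 path_weight_cat IH last_rev_belast.
by rewrite !path_weight_cons path_weight_nil addr0 w_sym addrC.
Qed.

Definition simple_path (x : N) (p : seq N) := path t x p && uniq (x :: p).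

Lemma simple_path_rev x p : simple_path x p -> simple_path (last x p) (rev (belast x p)).
Proof.
case/andP=> px ux; apply/andP; split.
  by rewrite rev_path (eq_path (e' := t)) // => a b; rewrite t_sym.
by rewrite -rev_rcons -lastI rev_uniq.
Qed.

Lemma simple_path_catl x s1 s2 : simple_path x (s1 ++ s2) -> simple_path x s1.
Proof.
by rewrite /simple_path cat_path -cat_cons cat_uniq => /andP[/andP[-> _] /andP[-> _]].
Qed.

Lemma simple_path_catr x s1 s2 :
  simple_path x (s1 ++ s2) -> simple_path (last x s1) s2.
Proof.
rewrite /simple_path cat_path -cat_cons cat_uniq.
case/andP=> /andP[_ ->] /and3P[_ dis us2]; rewrite /= us2 andbT.
apply: contra dis => s2_last; apply/hasP.
by exists (last x s1) => //; apply: mem_last.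
Qed.

Lemma tree_dist_unique x y d1 d2 : tree_dist t w x y d1 -> tree_dist t w x y d2 -> d1 = d2.
Proof.
move=> [p [pp up lp <-]] [q [pq uq lq <-]].
by rewrite (t_uniq_path pp up pq uq) // lp lq.
Qed.

Lemma tree_dist_sym x y d : tree_dist t w x y d -> tree_dist t w y x d.
Proof.
move=> [p [pp up <- <-]].
have /andP[pr ur] : simple_path (last x p) (rev (belast x p)).
  by apply: simple_path_rev; apply/andP.
by exists (rev (belast x p)); rewrite last_rev_belast path_weight_rev.
Qed.

Lemma tree_dist_join m p q : simple_path m p -> simple_path m q ->
  (forall u, u \in p -> u \in q -> False) ->
  tree_dist t w (last m p) (last m q) (W m p + W m q).
Proof.
move=> /andP[pp up] /andP[pq /= /andP[mq uq]] disj.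
have /andP[pr _] := simple_path_rev (introT andP (conj pp up)).
exists (rev (belast m p) ++ q); split.
- by rewrite cat_path pr last_rev_belast.
- rewrite -cat_cons -rev_rcons -lastI cat_uniq rev_uniq up uq andbT /=.
  apply/hasP=> -[u uq'] /[!(mem_rev, inE)] /orP[/eqP um|up'].
    by move: mq; rewrite -um uq'.
  exact: disj up' uq'.
- by rewrite last_cat last_rev_belast.
- by rewrite path_weight_cat path_weight_rev last_rev_belast.
Qed.

Lemma simple_path_branch_heads o c p q u :
  simple_path o (c ++ p) -> simple_path o (c ++ q) -> u \in p -> u \in q ->
  head u p = head u q.
Proof.
move=> sp sq up uq.
case/splitPr: up sp => p1 p2 sp; case/splitPr: uq sq => q1 q2 sq.
have to_u s1 s2 : simple_path o (c ++ s1 ++ u :: s2) -> simple_path o (c ++ rcons s1 u).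
  by rewrite -cat_rcons catA => /simple_path_catl.
have /andP[pp up] := to_u _ _ sp; have /andP[pq uq] := to_u _ _ sq.
have /eqP : c ++ rcons p1 u = c ++ rcons q1 u.
  by apply: t_uniq_path pp up pq uq _; rewrite !last_cat !last_rcons.
rewrite eqseq_cat // => /andP[_ /eqP/rcons_inj[->]].
by case: q1 {sp sq pp up pq uq}.
Qed.

Lemma tree_dist_lcp o p q : simple_path o p -> simple_path o q ->
  tree_dist t w (last o p) (last o q) (W o p + W o q - 2 * W o (lcp p q)).
Proof.
set c := lcp p q; set p' := drop (size c) p; set q' := drop (size c) q.
have cat_c s : prefix c s -> s = c ++ drop (size c) s.
  by rewrite prefixE => /eqP E; rewrite -{1}E cat_take_drop.
rewrite (cat_c p (prefix_lcpl p q)) (cat_c q (prefix_lcpr p q)) -/p' -/q'.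
move=> sp sq; rewrite !last_cat !path_weight_cat.
have disj u : u \in p' -> u \in q' -> False.
  move=> up uq; have := simple_path_branch_heads sp sq up uq.
  case E1: p' up => [//|z a] _; case E2: q' uq => [//|z' b] _ /= zz'.
  by subst z'; apply: drop_lcp_heads_differ E1 E2.
have := tree_dist_join (simple_path_catr sp) (simple_path_catr sq) disj.
by congr tree_dist; lra.
Qed.

Lemma exists_simple_path x y : exists p, simple_path x p && (last x p == y).
Proof.
have /connectP[p pp ->] := t_connect x y.
by case: (shortenP pp) => p' pp' up' _; exists p'; rewrite /simple_path pp' up' eqxx.
Qed.

Definition tree_path x y := xchoose (exists_simple_path x y).
Definition tdist x y := W x (tree_path x y).

Lemma tree_path_spec x y : simple_path x (tree_path x y) /\ last x (tree_path x y) = y.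
Proof. by have /andP[-> /eqP ->] := xchooseP (exists_simple_path x y). Qed.

Lemma tree_dist_tdist x y : tree_dist t w x y (tdist x y).
Proof. by case: (tree_path_spec x y) => /andP[pp up] lp; exists (tree_path x y). Qed.

Lemma tdistC x y : tdist x y = tdist y x.
Proof. exact: tree_dist_unique (tree_dist_tdist x y) (tree_dist_sym (tree_dist_tdist y x)). Qed.

Definition gromov o x y := W o (lcp (tree_path o x) (tree_path o y)).

Lemma tdist_gromov o x y : tdist x y = tdist o x + tdist o y - 2 * gromov o x y.
Proof.
case: (tree_path_spec o x) (tree_path_spec o y) => sx lx [sy ly].
by have := tree_dist_lcp sx sy; rewrite lx ly; apply: tree_dist_unique (tree_dist_tdist x y).
Qed.

Lemma gromov_min o x y z : Num.min (gromov o x z) (gromov o y z) <= gromov o x y.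
Proof.
have path_lcp : path t o (lcp (tree_path o x) (tree_path o y)).
  case: (tree_path_spec o x) => /andP[px _] _.
  by apply: path_prefix px (prefix_lcpl _ _).
rewrite ge_min; apply/orP.
by case/orP: (lcp_min_prefix (tree_path o x) (tree_path o y) (tree_path o z)) => le;
  [left | right]; apply: path_weight_prefix path_lcp le.
Qed.

Lemma tdist_four_point : four_point tdist.
Proof.
move=> x y z u; rewrite [tdist z u]tdistC [tdist y u]tdistC [tdist x u]tdistC.
rewrite !(tdist_gromov u x) (tdist_gromov u y z) le_max.
have := gromov_min u x y z; rewrite ge_min.
by case/orP=> h; apply/orP; [left | right]; lra.
Qed.

End WeightedTree.

Lemma PCG_four_point_representation (V : finType) (e : rel V) : PCG e ->
  exists (D : V -> V -> R) (dmin dmax : R),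
    [/\ forall u v, D u v = D v u, four_point D &
        forall u v, u != v -> (e u v <-> dmin <= D u v /\ D u v <= dmax)].
Proof.
move=> [N [t [w [f [dmin [dmax [[[t_sym _ t_conn t_uniq] w_sym w_ge0 _ _] [_ _ e_dist]]]]]]]].
exists (fun u v => tdist w t_conn (f u) (f v)), dmin, dmax; split.
- by move=> u v; apply: tdistC.
- by move=> x y z u; apply: tdist_four_point.
- by move=> u v uv; apply: e_dist uv _ (tree_dist_tdist _ _ _ _).
Qed.

Section FourPointRepresentation.
Variables (V : eqType) (e : rel V) (D : V -> V -> R) (dmin dmax : R).
Hypothesis e_irr : irreflexive e.
Hypothesis D_sym : forall u v, D u v = D v u.
Hypothesis D_four_point : four_point D.
Hypothesis e_D : forall u v, u != v -> (e u v <-> dmin <= D u v /\ D u v <= dmax).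

Lemma edge_dist u v : e u v -> dmin <= D u v /\ D u v <= dmax.
Proof. by move=> euv; apply/e_D => //; apply: contraTneq euv => ->; rewrite e_irr. Qed.

Lemma nonedge_short u v : u != v -> ~~ e u v -> D u v <= dmax -> D u v < dmin.
Proof.
move=> uv /negP neuv le_dmax; rewrite ltNge; apply/negP => ge_dmin.
by apply: neuv; apply/e_D.
Qed.

Lemma induced_2K2_long_nonedge x y z u :
  e x z -> e y u -> x != y -> y != z -> z != u -> u != x ->
  ~~ e x y -> ~~ e y z -> ~~ e z u -> ~~ e u x ->
  [\/ dmax < D x y, dmax < D y z, dmax < D z u | dmax < D u x].
Proof.
move=> exz eyu xy yz zu ux nxy nyz nzu nux.
case: (ltrP dmax (D x y)) => [|/(nonedge_short xy nxy) sxy]; first by constructor 1.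
case: (ltrP dmax (D y z)) => [|/(nonedge_short yz nyz) syz]; first by constructor 2.
case: (ltrP dmax (D z u)) => [|/(nonedge_short zu nzu) szu]; first by constructor 3.
case: (ltrP dmax (D u x)) => [|/(nonedge_short ux nux) sux]; first by constructor 4.
have [[xz _] [yu _]] := (edge_dist exz, edge_dist eyu).
have := D_four_point x z y u; rewrite (D_sym z y) (D_sym x u) le_max.
by case/orP; lra.
Qed.

Lemma joined_long_nonedges_absurd x y z u :
  dmax < D x y -> dmax < D z u -> e x z -> e x u -> e y z -> e y u -> False.
Proof.
move=> lxy lzu /edge_dist[_ xz] /edge_dist[_ xu] /edge_dist[_ yz] /edge_dist[_ yu].
by have := D_four_point x y z u; rewrite le_max; case/orP; lra.
Qed.

End FourPointRepresentation.

(* The non-edges are the 4-cycles 0-1-2-3 and 4-5-6-7. *)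
Definition compl_2C4 : rel 'I_8 :=
  fun x y => (x != y) && (((x < 4) != (y < 4)) || ~~ odd (x + y))%N.

Lemma compl_2C4_simple : simple_graph compl_2C4.
Proof.
split=> [x y|x]; last by rewrite /compl_2C4 eqxx.
by rewrite /compl_2C4 eq_sym addnC [(y < 4)%N == _]eq_sym.
Qed.

Lemma not_PCG_compl_2C4 : ~ PCG compl_2C4.
Proof.
case/PCG_four_point_representation=> D [dmin [dmax [D_sym D_fp e_D]]].
have e_irr : irreflexive compl_2C4 by case: compl_2C4_simple.
pose v i : 'I_8 := inZp i.
have [] := induced_2K2_long_nonedge e_irr D_sym D_fp e_D
  (x := v 0) (y := v 1) (z := v 2) (u := v 3) isT isT isT isT isT isT isT isT isT isT;
have [] := induced_2K2_long_nonedge e_irr D_sym D_fp e_D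
  (x := v 4) (y := v 5) (z := v 6) (u := v 7) isT isT isT isT isT isT isT isT isT isT;
by move=> l2 l1; apply: (joined_long_nonedges_absurd e_irr D_fp e_D l1 l2).
Qed.

Lemma inter_len_nat (a1 b1 a2 b2 : nat) :
  inter_len a1%:R b1%:R a2%:R b2%:R = (minn b1 b2 - maxn a1 a2)%:R :> R.
Proof.
rewrite /inter_len -!natr_min -natr_max minEnat maxEnat.
case: (leqP (maxn a1 a2) (minn b1 b2)) => [le|lt].
  by rewrite natrB // max_r // subr_ge0 ler_nat.
have -> : (minn b1 b2 - maxn a1 a2 = 0)%N by apply/eqP; rewrite subn_eq0 ltnW.
by rewrite max_l // subr_le0 ler_nat ltnW.
Qed.

(* (left endpoint, right endpoint, tolerance) of each vertex *)
Definition compl_2C4_intervals : seq (nat * nat * nat) :=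
  [:: (1, 20, 3); (20, 54, 6); (4, 13, 1); (19, 96, 4);
      (10, 52, 28); (3, 31, 88); (12, 35, 21); (7, 27, 18)]%N.

Lemma compl_2C4_tolerance : tolerance_graph compl_2C4.
Proof.
pose I (v : 'I_8) := nth (0, 0, 0)%N compl_2C4_intervals v.
exists (fun v => (I v).1.1%:R), (fun v => (I v).1.2%:R), (fun v => (I v).2%:R); split.
- by move=> v; rewrite ler_nat; case: v => -[|[|[|[|[|[|[|[|//]]]]]]]].
- by move=> v; rewrite ler0n.
- move=> x y xy; rewrite -natr_min minEnat inter_len_nat ler_nat.
  suff -> : compl_2C4 x y =
    (minn (I x).2 (I y).2 <= minn (I x).1.2 (I y).1.2 - maxn (I x).1.1 (I y).1.1)%N.
    by [].
  by move: x y xy; do 2!case=> -[|[|[|[|[|[|[|[|//]]]]]]]] ?.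
Qed.

Theorem theorem2 :
  exists (V : finType) (e : rel V),
    [/\ simple_graph e, tolerance_graph e & ~ PCG e].
Proof.
exists 'I_8, compl_2C4; split.
- exact: compl_2C4_simple.
- exact: compl_2C4_tolerance.
- exact: not_PCG_compl_2C4.
Qed.
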